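(* Let $p,q$ be odd primes with $q-p=2$, and let $D=D_1\cdots D_n$ with $D_1,\dots,D_n$ distinct primes, $2\nmid D$, $p\nmid D$, $q\nmid D$; put $\widehat{D_i}=D/D_i$. Let $E=E_-:y^2=x(x-pD)(x-qD)$, and for $d\in\mathbb{Q}(S,2)$ let $C_d: dw^2=d^2+2(p+q)Ddz^2+4D^2z^4$. (A) If $d\in\mathbb{Q}(S,2)$ satisfies $p\mid d$, or $q\mid d$, or $d=-1$, then $d\notin S^{(\varphi)}(E/\mathbb{Q})$. (B$_1$) (1) $C_2(\mathbb{Q}_2)\ne\emptyset$ iff $D(D+2p+2)\equiv1\pmod{16}$; (2) for each prime $l\mid pqD$, $C_2(\mathbb{Q}_l)\ne\emptyset$ iff $(\frac{2}{l})=1$, i.e. $l\equiv1,7\pmod8$. (B$_2$) (1) $C_{-2}(\mathbb{Q}_2)\ne\emptyset$ iff $D(-D+2p+2)\equiv3\pmod{16}$; (2) for each prime $l\mid pqD$, $C_{-2}(\mathbb{Q}_l)\ne\emptyset$ iff $(\frac{-2}{l})=1$, i.e. $l\equiv1,3\pmod8$. (C$_1$) For each $1\le i\le n$: (1) $C_{D_i}(\mathbb{Q}_2)\ne\emptyset$ iff $D_i\equiv1\pmod4$; (2) for each prime $l\mid pq\widehat{D_i}$, $C_{D_i}(\mathbb{Q}_l)\ne\emptyset$ iff $(\frac{D_i}{l})=1$; (3) $C_{D_i}(\mathbb{Q}_{D_i})\ne\emptyset$ iff $(\frac{-p\widehat{D_i}}{D_i})=(\frac{-q\widehat{D_i}}{D_i})=1$.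 (C$_2$) For each $1\le i\le n$: (1) $C_{-D_i}(\mathbb{Q}_2)\ne\emptyset$ iff $D_i\equiv3\pmod4$; (2) for each prime $l\mid pq\widehat{D_i}$, $C_{-D_i}(\mathbb{Q}_l)\ne\emptyset$ iff $(\frac{-D_i}{l})=1$; (3) $C_{-D_i}(\mathbb{Q}_{D_i})\ne\emptyset$ iff $(\frac{p\widehat{D_i}}{D_i})=(\frac{q\widehat{D_i}}{D_i})=1$.
   Context: $(\frac{\cdot}{\cdot})$ is the Legendre symbol. $S=\{\infty,2,p,q,D_1,\dots,D_n\}$, $\mathbb{Q}(S,2)=\langle -1,2,p,q,D_1,\dots,D_n\rangle\subset\mathbb{Q}^\star/\mathbb{Q}^{\star2}$ with squarefree integer representatives. $\varphi:E\to E'$, $E':y^2=x^3+2(p+q)Dx^2+4D^2x$, is the $2$-isogeny $(x,y)\mapsto(y^2/x^2,\ y(pqD^2-x^2)/x^2)$, and $S^{(\varphi)}(E/\mathbb{Q})$ is the set of $d\in\mathbb{Q}(S,2)$ with $C_d(\mathbb{Q}_v)\ne\emptyset$ for all $v\in S$. *)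

From Stdlib Require Import ZArith Znumtheory List Reals.
Import ListNotations.
Open Scope Z_scope.

Definition prodZ (l : list Z) : Z := fold_right Z.mul 1 l.

Definition legendre_one (a l : Z) : Prop :=
  ~ (l | a) /\ exists x : Z, (l | x ^ 2 - a).

(* Weighted-homogeneous (weights 1,2,1 on z,w,t) form of
   C_d : d w^2 = d^2 + 2(p+q) D d z^2 + 4 D^2 z^4, i.e. the smooth
   projective model  d w^2 = d^2 t^4 + 2(p+q) D d z^2 t^2 + 4 D^2 z^4. *)
Definition Cd_form (p q D d z w t : Z) : Z :=
  d * w ^ 2 - (d ^ 2 * t ^ 4 + 2 * (p + q) * D * d * z ^ 2 * t ^ 2
               + 4 * D ^ 2 * z ^ 4).

(* An l-adic integer is represented by a compatible sequence (x_k)_k of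
   integers, x_k being its residue mod l^k: l^k | x_{k+1} - x_k. *)
Definition compatible (l : Z) (x : nat -> Z) : Prop :=
  forall k : nat, (l ^ Z.of_nat k | x (S k) - x k).

(* C_d(Q_l) <> empty: a point of the projective model with coordinates in
   Q_l; after weighted rescaling, a Z_l-point (z : w : t) with z, t not
   both divisible by l (Z_l = inverse limit of Z / l^k). *)
Definition Cd_Ql_nonempty (p q D d l : Z) : Prop :=
  exists z w t : nat -> Z,
    compatible l z /\ compatible l w /\ compatible l t /\
    (~ (l | z 1%nat) \/ ~ (l | t 1%nat)) /\
    forall k : nat, (l ^ Z.of_nat k | Cd_form p q D d (z k) (w k) (t k)).

Definition Cd_R_nonempty (p q D d : Z) : Prop :=
  exists z w t : R, (z <> 0 \/ t <> 0)%R /\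
    (IZR d * w ^ 2 = IZR d ^ 2 * t ^ 4 + 2 * IZR (p + q) * IZR D * IZR d * z ^ 2 * t ^ 2
                     + 4 * IZR D ^ 2 * z ^ 4)%R.

Definition finite_place (p q : Z) (Ds : list Z) (l : Z) : Prop :=
  l = 2 \/ l = p \/ l = q \/ In l Ds.

(* Q(S,2) with squarefree integer representatives *)
Definition in_QS2 (p q : Z) (Ds : list Z) (d : Z) : Prop :=
  d <> 0 /\ (forall r, prime r -> ~ (r * r | d)) /\
  (forall r, prime r -> (r | d) -> finite_place p q Ds r).

Definition in_Sphi (p q : Z) (Ds : list Z) (d : Z) : Prop :=
  in_QS2 p q Ds d /\ Cd_R_nonempty p q (prodZ Ds) d /\
  (forall l, finite_place p q Ds l -> Cd_Ql_nonempty p q (prodZ Ds) d l).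

(* Each local condition is decided by a primitive point modulo a small power of l.
   At an odd l | p q D with l not dividing d the quartic reduces modulo l to d w^2 minus a
   square (at l = p, q because (q - p)^2 = 4), so a point makes d a square mod l, and
   conversely the point (0 : sqrt d : 1) is simple and lifts by Hensel's lemma.  At
   l = D_i | d, w is divisible by l and (z : t) becomes a zero of the quartic
   t^4 + 2e(p+q)Dh z^2 t^2 + 4Dh^2 z^4, which is a norm form in two ways; this yields the
   conditions on -e p Dh and -e q Dh, and a simple zero built from their square roots
   lifts.  A prime dividing d exactly once but not D admits no point at all, and since
   one of p, q is 3 mod 4 the class d = -1 fails there too.  At l = 2 a finite search
   modulo 16 or 64 decides.  Euler's criterion and Gauss's lemma turn the conditions
   on +-2 and -1 into congruences. *)

From Stdlib Require Import ZArith Znumtheory List Lia Bool Setoid Morphisms ClassicalEpsilon.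
Import ListNotations.
From mathcomp Require ssreflect ssrfun ssrbool eqtype ssrnat seq div prime.
From mathcomp Require fintype ssralg poly zmodp finalg finfield zify.
Set Bullet Behavior "Strict Subproofs".

Open Scope Z_scope.

Lemma Z_divide_pow_sub (l a b e : Z) : (l | a - b) -> 0 <= e -> (l | a ^ e - b ^ e).
Proof.
  intros Hab He. pattern e. apply natlike_ind; [|intros k Hk IH|exact He].
  - rewrite !Z.pow_0_r, Z.sub_diag. apply Z.divide_0_r.
  - rewrite !Z.pow_succ_r by exact Hk.
    replace (a * a ^ k - b * b ^ k) with (a * (a ^ k - b ^ k) + b ^ k * (a - b)) by ring.
    apply Z.divide_add_r; apply Z.divide_mul_r; assumption.
Qed.

Module PrimeFieldSquares.
Import ssreflect ssrfun ssrbool eqtype ssrnat seq div prime.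
Import fintype ssralg poly zmodp finalg finfield zify.
Local Set Implicit Arguments.
Local Unset Strict Implicit.
Import GRing.Theory.

Section PrimeField.
Variable n : nat.
Hypothesis n_prime : prime n.
Local Notation F := 'F_n.
Local Open Scope ring_scope.

Lemma Fp_natr_eq (a b : nat) : ((a%:R : F) == b%:R) = (a %% n == b %% n)%N.
Proof.
apply/eqP/eqP => [H|H].
- by rewrite -!(val_Fp_nat n_prime) H.
- by apply: val_inj; rewrite /= !(val_Fp_nat n_prime).
Qed.

Lemma Fp_natr_eq0 (a : nat) : ((a%:R : F) == 0) = (n %| a)%N.
Proof. by rewrite -[0 : F]/(0%:R) Fp_natr_eq mod0n. Qed.

Lemma Fp_fermat (x : F) : x != 0 -> x ^+ n.-1 = 1.
Proof.
move=> x0; apply: (mulIf x0); rewrite mul1r -exprSr prednK ?prime_gt0 //.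
by rewrite -{2}(expf_card x) card_Fp.
Qed.

Lemma fermat_nat (a : nat) : ~~ (n %| a)%N -> a ^ n.-1 = 1 %[mod n].
Proof.
move=> na; apply/eqP; rewrite -Fp_natr_eq natrX.
by rewrite Fp_fermat // Fp_natr_eq0.
Qed.

(* If a^m = 1 with n = 2m+1 and a were not a square, the m + 1 distinct
   elements a, 1^2, ..., m^2 would all be roots of X^m - 1. *)
Lemma euler_criterion_nat (a m : nat) : n = m.*2.+1 -> a ^ m = 1 %[mod n] ->
  exists x : nat, x * x = a %[mod n].
Proof.
move=> def_n ha; have n_gt1 := prime_gt1 n_prime.
have m_gt0 : (0 < m)%N by lia.
have half_n : m.*2 = n.-1 by rewrite def_n.
have [/existsP [x /eqP Hx] | not_sq] := boolP [exists x : F, x ^+ 2 == a%:R].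
  exists (nat_of_ord x); apply/eqP; rewrite -Fp_natr_eq natrM.
  by rewrite (natr_Zp x) -expr2 Hx.
exfalso.
set P : {poly F} := 'X^m - 1%:P.
have P_neq0 : P != 0 by rewrite -size_poly_gt0 size_XnsubC.
have rootP y : root P y = (y ^+ m == 1) by rewrite /P rootE !hornerE subr_eq0.
have small_neq0 i : (0 < i < n)%N -> (i%:R : F) != 0.
  by case/andP=> i0 iN; rewrite Fp_natr_eq0; apply/negP => /(dvdn_leq i0); rewrite leqNgt iN.
set rs := [seq (i%:R : F) ^+ 2 | i <- iota 1 m].
have all_roots : all (root P) ((a%:R : F) :: rs).
  rewrite /= rootP -natrX -[1 : F]/(1%:R) Fp_natr_eq ha eqxx /=.
  apply/allP => y /mapP [i]; rewrite mem_iota => /andP [i1 i2] ->.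
  by rewrite rootP -exprM mul2n half_n Fp_fermat // small_neq0 //; lia.
have uniq_roots : uniq ((a%:R : F) :: rs).
  rewrite /= map_inj_in_uniq ?iota_uniq ?andbT.
    by apply/mapP => [[i _ Hi]]; move/negP: not_sq; apply; apply/existsP; exists i%:R; rewrite -Hi.
  move=> i j; rewrite !mem_iota => /andP [i1 i2] /andP [j1 j2] /eqP.
  rewrite -subr_eq0 subr_sqr mulf_eq0 => /orP [].
    rewrite subr_eq0 Fp_natr_eq !modn_small => [/eqP //||]; lia.
  rewrite -natrD Fp_natr_eq0 => /(dvdn_leq _) ij_ge_n; exfalso; lia.
by have := max_poly_roots P_neq0 all_roots uniq_roots; rewrite size_XnsubC //= size_map size_iota ltnn.
Qed.

End PrimeField.

Lemma prime_Z_to_nat (l : Z) : Znumtheory.prime l -> prime (Z.to_nat l).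
Proof.
move=> l_prime; have l_ge2 := prime_ge_2 l l_prime.
apply/primeP; split; first lia.
move=> d /dvdnP [k def_l]; apply/orP.
have /(prime_divisors _ l_prime) : (Z.of_nat d | l)%Z by exists (Z.of_nat k); lia.
case=> [|[|[|]]] Hd; lia.
Qed.

Lemma Z_of_nat_expn (a k : nat) : Z.of_nat (a ^ k) = Z.of_nat a ^ Z.of_nat k.
Proof. lia. Qed.

Lemma Z_of_nat_eqmod (x y n : nat) : x = y %[mod n] -> (Z.of_nat n | Z.of_nat x - Z.of_nat y).
Proof.
move=> xy; rewrite (divn_eq x n) (divn_eq y n) xy.
by exists (Z.of_nat (x %/ n) - Z.of_nat (y %/ n)); lia.
Qed.

Lemma nat_eqmod_of_Z (x y n : nat) : (Z.of_nat n | Z.of_nat x - Z.of_nat y) -> x = y %[mod n].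
Proof.
wlog le_yx : x y / (y <= x)%N.
  move=> W xy; case/orP: (leq_total y x) => [/W|le_xy]; first exact.
  by symmetry; apply: W le_xy _; apply/Z.divide_opp_r; rewrite Z.opp_sub_distr Z.add_comm.
move=> [k Hk]; apply/eqP; rewrite eqn_mod_dvd //; apply/dvdnP; exists (Z.to_nat k); nia.
Qed.

Lemma Z_to_nat_mod_spec (l a : Z) : 0 < l -> (l | a - Z.of_nat (Z.to_nat (a mod l))).
Proof.
move=> l_gt0; have := Z.mod_pos_bound a l l_gt0; have := Z.div_mod a l.
by exists (a / l); lia.
Qed.

Lemma Zfermat (l a : Z) : Znumtheory.prime l -> ~ (l | a) -> (l | a ^ (l - 1) - 1).
Proof.
move=> l_prime l_ndvd_a; have l_ge2 := prime_ge_2 l l_prime.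
set r := Z.to_nat (a mod l).
have a_r := Z_to_nat_mod_spec a (ltac:(lia) : 0 < l).
have r_ndvd : ~~ (Z.to_nat l %| r)%N.
  apply/negP => /dvdnP [k def_r]; apply: l_ndvd_a.
  rewrite -(Z.sub_add (Z.of_nat r) a); apply: Z.divide_add_r a_r _; exists (Z.of_nat k).
  by rewrite def_r Nat2Z.inj_mul Z2Nat.id; lia.
have := Z_of_nat_eqmod (@fermat_nat _ (prime_Z_to_nat l_prime) _ r_ndvd).
rewrite Z_of_nat_expn Z2Nat.id; last lia.
have -> : Z.of_nat (Z.to_nat l).-1 = l - 1 by lia.
move=> r_pow; replace (a ^ (l - 1) - 1) with
  ((a ^ (l - 1) - Z.of_nat r ^ (l - 1)) + (Z.of_nat r ^ (l - 1) - 1)) by ring.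
by apply: Z.divide_add_r _ r_pow; apply: Z_divide_pow_sub a_r _; lia.
Qed.

Lemma Zeuler_criterion (l m a : Z) : Znumtheory.prime l -> l = 2 * m + 1 ->
  (l | a ^ m - 1) -> exists x, (l | x ^ 2 - a).
Proof.
move=> l_prime def_l a_pow; have l_ge2 := prime_ge_2 l l_prime.
set r := Z.to_nat (a mod l).
have a_r := Z_to_nat_mod_spec a (ltac:(lia) : 0 < l).
have r_pow : r ^ Z.to_nat m = 1 %[mod Z.to_nat l].
  apply: nat_eqmod_of_Z; rewrite Z_of_nat_expn (Z2Nat.id l) ?(Z2Nat.id m) /=; try lia.
  replace (Z.of_nat r ^ m - 1) with ((a ^ m - 1) - (a ^ m - Z.of_nat r ^ m)) by ring.
  by apply: Z.divide_sub_r a_pow _; apply: Z_divide_pow_sub a_r _; lia.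
have [x /Z_of_nat_eqmod x_sq] :=
  @euler_criterion_nat _ (prime_Z_to_nat l_prime) r (Z.to_nat m) (ltac:(lia)) r_pow.
exists (Z.of_nat x); rewrite Z2Nat.id in x_sq; last lia.
replace (Z.of_nat x ^ 2 - a) with ((Z.of_nat (x * x) - Z.of_nat r) - (a - Z.of_nat r)) by lia.
exact: Z.divide_sub_r x_sq a_r.
Qed.
End PrimeFieldSquares.

Lemma divide_sq l a : (l | a) -> (l | a ^ 2).
Proof. intros H. rewrite Z.pow_2_r. apply Z.divide_mul_l; exact H. Qed.

Lemma not_divide_of_square_mod l a x : (l | x ^ 2 - a) -> ~ (l | a) -> ~ (l | x).
Proof.
  intros H Ha Hx. apply Ha. replace a with (x ^ 2 - (x ^ 2 - a)) by ring.
  apply Z.divide_sub_r; [apply divide_sq|]; assumption.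
Qed.

Section PrimeDivisibility.
Variable l : Z.
Hypothesis l_prime : prime l.

Lemma prime_not_divide_mul a b : ~ (l | a) -> ~ (l | b) -> ~ (l | a * b).
Proof. intros Ha Hb H. destruct (prime_mult _ l_prime _ _ H); auto. Qed.

Lemma prime_divide_mul_cancel_l a b : (l | a * b) -> ~ (l | a) -> (l | b).
Proof. intros H Ha. destruct (prime_mult _ l_prime _ _ H); tauto. Qed.

Lemma prime_not_divide_pow a k : ~ (l | a) -> 0 <= k -> ~ (l | a ^ k).
Proof.
  intros Ha Hk. pattern k. apply natlike_ind; [|intros j Hj IH|exact Hk].
  - rewrite Z.pow_0_r. intros H1. apply Z.divide_1_r in H1. pose proof (prime_ge_2 _ l_prime). lia.
  - rewrite Z.pow_succ_r by exact Hj. apply prime_not_divide_mul; assumption.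
Qed.

Lemma prime_divide_sq a : (l | a ^ 2) -> (l | a).
Proof. intros H. rewrite Z.pow_2_r in H. destruct (prime_mult _ l_prime _ _ H); auto. Qed.

Lemma prime_not_divide_unit e : e = 1 \/ e = -1 -> ~ (l | e).
Proof.
  pose proof (prime_ge_2 _ l_prime) as l_ge2.
  intros He H. assert (H1 : (l | 1)).
  { destruct He as [-> | ->]; [exact H | exact (proj1 (Z.divide_opp_r l 1) H)]. }
  apply Z.divide_pos_le in H1; lia.
Qed.

Lemma exists_inverse_mod a : ~ (l | a) -> exists b, (l | a * b - 1).
Proof.
  intros Ha. destruct (Zis_gcd_bezout _ _ _ (prime_rel_prime _ l_prime _ Ha)) as [u v Huv].
  exists v, (- u). lia.
Qed.

Lemma square_mod_of_mul_sq a u b : (l | a * u ^ 2 - b ^ 2) -> ~ (l | b) -> exists x, (l | x ^ 2 - a).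
Proof.
  intros H Hb.
  assert (Hu : ~ (l | u)).
  { intros Hu. apply Hb, prime_divide_sq. replace (b ^ 2) with (a * u ^ 2 - (a * u ^ 2 - b ^ 2)) by ring.
    apply Z.divide_sub_r; [apply Z.divide_mul_r, divide_sq, Hu|exact H]. }
  destruct (exists_inverse_mod _ Hu) as [v [k Hk]].
  exists (b * v).
  replace ((b * v) ^ 2 - a) with (- (a * u ^ 2 - b ^ 2) * v ^ 2 + a * (u * v + 1) * (u * v - 1)) by ring.
  apply Z.divide_add_r.
  - apply Z.divide_mul_l, Z.divide_opp_r. exact H.
  - apply Z.divide_mul_r. rewrite Hk. apply Z.divide_factor_r.
Qed.

Hypothesis l_odd : l <> 2.

Lemma odd_prime_not_divide_2 : ~ (l | 2).
Proof. pose proof (prime_ge_2 _ l_prime). intros H2. apply Z.divide_pos_le in H2; lia. Qed.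

Lemma odd_prime_not_divide_4 : ~ (l | 4).
Proof. change 4 with (2 ^ 2). apply prime_not_divide_pow; [exact odd_prime_not_divide_2|lia]. Qed.

End PrimeDivisibility.

Lemma odd_of_not_divide_2 x : ~ (2 | x) -> exists k, x = 2 * k + 1.
Proof.
  intros H. exists (x / 2). pose proof (Z.div_mod x 2 ltac:(lia)).
  pose proof (Z.mod_pos_bound x 2 ltac:(lia)).
  assert (x mod 2 <> 0) by (intros E; apply H; exists (x / 2); lia).
  lia.
Qed.

Lemma legendre_one_iff_euler l m a : prime l -> l = 2 * m + 1 -> 0 <= m -> ~ (l | a) ->
  (legendre_one a l <-> (l | a ^ m - 1)).
Proof.
  intros Hl Hm Hm0 Ha. split.
  - intros [_ [x Hx]].
    pose proof (PrimeFieldSquares.Zfermat Hl (not_divide_of_square_mod l a x Hx Ha)) as Hfermat.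
    replace (l - 1) with (2 * m) in Hfermat by lia. rewrite Z.pow_mul_r in Hfermat by lia.
    replace (a ^ m - 1) with (((x ^ 2) ^ m - 1) - ((x ^ 2) ^ m - a ^ m)) by ring.
    apply Z.divide_sub_r; [exact Hfermat|]. apply Z_divide_pow_sub; [exact Hx|exact Hm0].
  - intros Hpow. split; [exact Ha|]. exact (PrimeFieldSquares.Zeuler_criterion Hl Hm Hpow).
Qed.

Fixpoint prod_seg (f : Z -> Z) (a : Z) (n : nat) : Z :=
  match n with O => 1 | S n' => f (a + 1) * prod_seg f (a + 1) n' end.

Lemma prod_seg_add f a n1 n2 :
  prod_seg f a (n1 + n2) = prod_seg f a n1 * prod_seg f (a + Z.of_nat n1) n2.
Proof.
  revert a; induction n1 as [|n1 IH]; intros a; cbn [prod_seg Nat.add].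
  - rewrite Z.add_0_r. ring.
  - rewrite IH. replace (a + 1 + Z.of_nat n1) with (a + Z.of_nat (S n1)) by lia. ring.
Qed.

Lemma prod_seg_ext f g a n : (forall j, f j = g j) -> prod_seg f a n = prod_seg g a n.
Proof. intros H; revert a; induction n; intros a; cbn [prod_seg]; [reflexivity|]. rewrite H, IHn; reflexivity. Qed.

Lemma prod_seg_scale c f a n : prod_seg (fun j => c * f j) a n = c ^ Z.of_nat n * prod_seg f a n.
Proof.
  revert a; induction n as [|n IH]; intros a; cbn [prod_seg].
  - rewrite Z.pow_0_r. ring.
  - rewrite IH, Nat2Z.inj_succ, Z.pow_succ_r by lia. ring.
Qed.

Lemma prod_seg_S_r f a n : prod_seg f a (S n) = prod_seg f a n * f (a + Z.of_nat n + 1).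
Proof. rewrite <- Nat.add_1_r, prod_seg_add. cbn [prod_seg]. ring. Qed.

Lemma prod_seg_congr_opp l f g a n : (forall j, (l | f j + g j)) ->
  (l | prod_seg f a n - (-1) ^ Z.of_nat n * prod_seg g a n).
Proof.
  intros H. revert a; induction n as [|n IH]; intros a; cbn [prod_seg].
  - rewrite Z.mul_1_r, Z.sub_diag. apply Z.divide_0_r.
  - rewrite Nat2Z.inj_succ, Z.pow_succ_r by lia.
    replace (f (a + 1) * prod_seg f (a + 1) n - -1 * (-1) ^ Z.of_nat n * (g (a + 1) * prod_seg g (a + 1) n))
      with (f (a + 1) * (prod_seg f (a + 1) n - (-1) ^ Z.of_nat n * prod_seg g (a + 1) n)
            + (-1) ^ Z.of_nat n * prod_seg g (a + 1) n * (f (a + 1) + g (a + 1))) by ring.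
    apply Z.divide_add_r; apply Z.divide_mul_r; auto.
Qed.

Definition factorial_Z (n : nat) : Z := prod_seg (fun j => j) 0 n.
Definition evens_prod (h : nat) : Z := prod_seg (fun j => 2 * j) 0 h.
Definition odds_prod (r : nat) : Z := prod_seg (fun j => 2 * j - 1) 0 r.

Lemma evens_odds_prod h :
  evens_prod h * odds_prod h = factorial_Z (2 * h) /\
  evens_prod h * odds_prod (S h) = factorial_Z (2 * h + 1).
Proof.
  unfold evens_prod, odds_prod, factorial_Z. induction h as [|h [IH1 IH2]].
  - split; reflexivity.
  - assert (E : prod_seg (fun j => 2 * j) 0 (S h) * prod_seg (fun j => 2 * j - 1) 0 (S h)
                = prod_seg (fun j => j) 0 (2 * S h)).
    { rewrite (prod_seg_S_r (fun j => 2 * j)), (prod_seg_S_r (fun j => 2 * j - 1)).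
      replace (2 * S h)%nat with (S (S (2 * h))) by lia.
      rewrite !(prod_seg_S_r (fun j => j)), <- IH1. rewrite ?Nat2Z.inj_succ, ?Nat2Z.inj_mul. ring. }
    split; [exact E|].
    rewrite (prod_seg_S_r (fun j => 2 * j - 1)), Z.mul_assoc, E.
    replace (2 * S h + 1)%nat with (S (2 * S h)) by lia.
    rewrite (prod_seg_S_r (fun j => j)), ?Nat2Z.inj_succ, ?Nat2Z.inj_mul. f_equal; lia.
Qed.

Lemma prod_seg_reflect_odds r h :
  prod_seg (fun j => 2 * (Z.of_nat h + Z.of_nat r) + 1 - 2 * j) (Z.of_nat h) r = odds_prod r.
Proof.
  revert h; induction r as [|r IH]; intros h; cbn [prod_seg]; [reflexivity|].
  replace (Z.of_nat h + 1) with (Z.of_nat (S h)) by lia.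
  rewrite (prod_seg_ext _ (fun j => 2 * (Z.of_nat (S h) + Z.of_nat r) + 1 - 2 * j)) by (intros; lia).
  rewrite IH. unfold odds_prod. rewrite prod_seg_S_r, Z.mul_comm. f_equal. lia.
Qed.

Lemma prime_not_divide_factorial l n : prime l -> Z.of_nat n < l -> ~ (l | factorial_Z n).
Proof.
  intros Hl. induction n as [|n IH]; intros Hn; unfold factorial_Z.
  - apply (prime_not_divide_unit l Hl). left; reflexivity.
  - rewrite prod_seg_S_r. apply (prime_not_divide_mul l Hl); [apply IH; lia|].
    intros H. apply Z.divide_pos_le in H; lia.
Qed.

(* Gauss's lemma for 2: with l = 2m + 1 and m = h + r, the factors 2j > m of
   2^m m! = prod_{j <= m} 2j are congruent to minus the odd numbers below 2r,
   and the remaining evens and those odds multiply to m! again. *)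
Lemma gauss_lemma_two l h r : prime l -> l = 2 * (Z.of_nat h + Z.of_nat r) + 1 ->
  (r = h \/ r = S h) -> (l | 2 ^ Z.of_nat (h + r) - (-1) ^ Z.of_nat r).
Proof.
  intros Hl Hlr Hr.
  assert (Hfact : evens_prod h * odds_prod r = factorial_Z (h + r)).
  { destruct (evens_odds_prod h) as [A B]. destruct Hr as [-> | ->].
    - rewrite A. f_equal. lia.
    - rewrite B. f_equal. lia. }
  assert (Hpow : 2 ^ Z.of_nat (h + r) * factorial_Z (h + r)
                 = evens_prod h * prod_seg (fun j => 2 * j) (Z.of_nat h) r).
  { unfold factorial_Z, evens_prod. rewrite <- prod_seg_scale, prod_seg_add. reflexivity. }
  apply (prime_divide_mul_cancel_l l Hl (factorial_Z (h + r))).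
  2: { apply prime_not_divide_factorial; [exact Hl|lia]. }
  rewrite Z.mul_comm, Z.mul_sub_distr_r, Hpow, <- Hfact, <- (prod_seg_reflect_odds r h).
  replace (evens_prod h * prod_seg (fun j => 2 * j) (Z.of_nat h) r - (-1) ^ Z.of_nat r *
           (evens_prod h * prod_seg (fun j => 2 * (Z.of_nat h + Z.of_nat r) + 1 - 2 * j) (Z.of_nat h) r))
    with (evens_prod h * (prod_seg (fun j => 2 * j) (Z.of_nat h) r - (-1) ^ Z.of_nat r *
           prod_seg (fun j => 2 * (Z.of_nat h + Z.of_nat r) + 1 - 2 * j) (Z.of_nat h) r)) by ring.
  apply Z.divide_mul_r, prod_seg_congr_opp. intros j. exists 1. lia.
Qed.

Lemma neg_one_pow n : 0 <= n ->
  ((-1) ^ n = 1 /\ n mod 2 = 0) \/ ((-1) ^ n = -1 /\ n mod 2 = 1).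
Proof.
  intros Hn. change (-1) with (- (1)). destruct (Z.Even_or_Odd n) as [He|Ho].
  - left. rewrite Z.pow_opp_even, Z.pow_1_l by (auto; lia). destruct He; Z.to_euclidean_division_equations; lia.
  - right. rewrite Z.pow_opp_odd, Z.pow_1_l by (auto; lia). destruct Ho; Z.to_euclidean_division_equations; lia.
Qed.

Lemma divide_sub_neg_one_pow_iff l x n : prime l -> l <> 2 -> 0 <= n ->
  (l | x - (-1) ^ n) -> ((l | x - 1) <-> n mod 2 = 0).
Proof.
  intros Hl Hl2 Hn H. destruct (neg_one_pow n Hn) as [[E P]|[E P]]; rewrite E in H.
  - split; [intros _; exact P|intros _; exact H].
  - split; [|lia]. intros H1. exfalso. apply (odd_prime_not_divide_2 l Hl Hl2).
    replace 2 with ((x - -1) - (x - 1)) by ring. apply Z.divide_sub_r; assumption.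
Qed.

Lemma legendre_one_two_parity l h r : prime l -> l = 2 * (Z.of_nat h + Z.of_nat r) + 1 ->
  (r = h \/ r = S h) ->
  (legendre_one 2 l <-> Z.of_nat r mod 2 = 0) /\ (legendre_one (-2) l <-> Z.of_nat h mod 2 = 0).
Proof.
  intros Hl Hlr Hr. pose proof (prime_ge_2 _ Hl).
  assert (Hl2 : l <> 2) by lia.
  pose proof (gauss_lemma_two l h r Hl Hlr Hr) as G. rewrite Nat2Z.inj_add in G.
  set (m := Z.of_nat h + Z.of_nat r) in *.
  assert (H2 : ~ (l | 2)) by exact (odd_prime_not_divide_2 l Hl Hl2).
  assert (Hm2 : ~ (l | -2)) by (intros Hm2; apply H2, Z.divide_opp_r; exact Hm2).
  split.
  - rewrite (legendre_one_iff_euler l m) by (auto; lia).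
    apply divide_sub_neg_one_pow_iff; auto; lia.
  - rewrite (legendre_one_iff_euler l m) by (auto; lia).
    assert (Hpar : (m + Z.of_nat r) mod 2 = Z.of_nat h mod 2)
      by (unfold m; Z.to_euclidean_division_equations; lia).
    rewrite <- Hpar.
    apply divide_sub_neg_one_pow_iff; auto; [lia|].
    replace ((-2) ^ m - (-1) ^ (m + Z.of_nat r)) with ((-1) ^ m * (2 ^ m - (-1) ^ Z.of_nat r)).
    + apply Z.divide_mul_r. exact G.
    + rewrite Z.pow_add_r by lia. change (-2) with (-1 * 2). rewrite Z.pow_mul_l. ring.
Qed.

Lemma legendre_one_two l : prime l -> l <> 2 ->
  (legendre_one 2 l <-> l mod 8 = 1 \/ l mod 8 = 7) /\
  (legendre_one (-2) l <-> l mod 8 = 1 \/ l mod 8 = 3).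
Proof.
  intros Hl Hl2. pose proof (prime_ge_2 _ Hl).
  assert (Hodd : l mod 2 = 1).
  { destruct (Z.eq_dec (l mod 2) 0) as [E|E]; [|pose proof (Z.mod_pos_bound l 2); lia].
    exfalso. apply Hl2. symmetry. apply prime_div_prime; [exact prime_2|exact Hl|].
    apply Z.mod_divide; [lia|exact E]. }
  set (h := Z.to_nat ((l - 1) / 4)). set (r := Z.to_nat ((l - 1) / 2 - (l - 1) / 4)).
  assert (Hh : Z.of_nat h = (l - 1) / 4)
    by (unfold h; rewrite Z2Nat.id; Z.to_euclidean_division_equations; lia).
  assert (Hr : Z.of_nat r = (l - 1) / 2 - (l - 1) / 4)
    by (unfold r; rewrite Z2Nat.id; Z.to_euclidean_division_equations; lia).
  destruct (legendre_one_two_parity l h r Hl) as [E2 Em2];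
    [Z.to_euclidean_division_equations; lia..|].
  rewrite E2, Em2, Hh, Hr. split; Z.to_euclidean_division_equations; lia.
Qed.

Lemma not_legendre_one_neg_one l : prime l -> l mod 4 = 3 -> ~ legendre_one (-1) l.
Proof.
  intros Hl H4. pose proof (prime_ge_2 _ Hl).
  assert (Hl2 : l <> 2) by (intros ->; discriminate).
  assert (Hm1 : ~ (l | -1)) by (apply prime_not_divide_unit; [exact Hl|right; reflexivity]).
  rewrite (legendre_one_iff_euler l ((l - 1) / 2)) by
    (auto; Z.to_euclidean_division_equations; lia).
  rewrite (divide_sub_neg_one_pow_iff l _ ((l - 1) / 2) Hl Hl2) by
    (try (rewrite Z.sub_diag; apply Z.divide_0_r); Z.to_euclidean_division_equations; lia).
  Z.to_euclidean_division_equations; lia.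
Qed.

Definition Zl_root (l : Z) (P : Z -> Z) : Prop :=
  exists w : nat -> Z, compatible l w /\ forall k : nat, (l ^ Z.of_nat k | P (w k)).

Lemma divide_pow_le l a b : 0 <= a <= b -> (l ^ a | l ^ b).
Proof.
  intros H. replace b with (a + (b - a)) by lia. rewrite Z.pow_add_r by lia.
  apply Z.divide_factor_l.
Qed.

Lemma dependent_choice_seq (P : nat -> Z -> Prop) (R : nat -> Z -> Z -> Prop) v0 :
  P 0%nat v0 -> (forall n v, P n v -> exists v', R n v v' /\ P (S n) v') ->
  exists g : nat -> Z, forall n, P n (g n) /\ R n (g n) (g (S n)).
Proof.
  intros H0 Hstep.
  set (step := fun n v => epsilon (inhabits 0) (fun v' => P n v -> R n v v' /\ P (S n) v')).
  assert (Hst : forall n v, P n v -> R n v (step n v) /\ P (S n) (step n v)).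
  { intros n v Hv. refine (epsilon_spec (inhabits 0) (fun v' => P n v -> R n v v' /\ P (S n) v') _ Hv).
    destruct (Hstep n v Hv) as [v' Hv']. exists v'. auto. }
  set (g := fix g n := match n with O => v0 | S m => step m (g m) end).
  assert (HP : forall n, P n (g n)) by (induction n; simpl; auto; apply Hst; auto).
  exists g. intros n. split; [auto|]. apply Hst; auto.
Qed.

(* Newton's step v -> v - c h l^(n+1), h an inverse of 2 d0 v mod l. *)
Lemma hensel_lift_odd l d0 F0 s : prime l -> l <> 2 -> ~ (l | d0) -> ~ (l | s) ->
  (l | d0 * s ^ 2 - F0) -> Zl_root l (fun w => d0 * w ^ 2 - F0).
Proof.
  intros Hl Hl2 Hd Hs H1. pose proof (prime_ge_2 _ Hl).
  destruct (dependent_choice_seq (fun n v => (l ^ Z.of_nat (S n) | d0 * v ^ 2 - F0) /\ ~ (l | v))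
     (fun n v v' => (l ^ Z.of_nat (S n) | v' - v)) s) as [g Hg].
  { rewrite Z.pow_1_r. auto. }
  { intros n v [[c Hc] Hv]. set (L := l ^ Z.of_nat (S n)).
    assert (HL : L = l * l ^ Z.of_nat n) by (unfold L; rewrite Nat2Z.inj_succ, Z.pow_succ_r; lia).
    assert (Hg : ~ (l | 2 * d0 * v)).
    { repeat apply prime_not_divide_mul; auto. apply (odd_prime_not_divide_2 l Hl Hl2). }
    destruct (exists_inverse_mod l Hl _ Hg) as [h [e He]].
    exists (v + L * (- c * h)). split; [exists (- c * h); ring|]. split.
    - rewrite Nat2Z.inj_succ, Z.pow_succ_r by lia. fold L.
      exists (- c * e + l ^ Z.of_nat n * d0 * c * c * h * h).
      replace (d0 * (v + L * (- c * h)) ^ 2 - F0) with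
        ((d0 * v ^ 2 - F0) - L * c * (2 * d0 * v * h) + L * L * d0 * c * c * h * h) by ring.
      rewrite Hc. fold L. replace (2 * d0 * v * h) with (e * l + 1) by lia.
      rewrite HL at 3. ring.
    - intros Hdv. apply Hv. replace v with ((v + L * (- c * h)) - L * (-c * h)) by ring.
      apply Z.divide_sub_r; [exact Hdv|]. rewrite HL. apply Z.divide_mul_l, Z.divide_factor_l. }
  exists g. split; intros k; destruct (Hg k) as [[Hk _] Hr].
  - eapply Z.divide_trans; [|exact Hr]. apply divide_pow_le. lia.
  - eapply Z.divide_trans; [|exact Hk]. apply divide_pow_le. lia.
Qed.

(* Over Z_2 the step v -> v + c 2^(n+2) keeps a solution modulo 2^(n+3). *)
Lemma hensel_lift_two d0 F0 : ~ (2 | d0) -> (8 | d0 - F0) -> Zl_root 2 (fun w => d0 * w ^ 2 - F0).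
Proof.
  intros Hd H1.
  destruct (dependent_choice_seq (fun n v => (2 ^ (Z.of_nat n + 3) | d0 * v ^ 2 - F0) /\ ~ (2 | v))
     (fun n v v' => (2 ^ (Z.of_nat n + 2) | v' - v)) 1) as [g Hg].
  { split; [|intros [c Hc]; lia]. change (2 ^ (Z.of_nat 0 + 3)) with 8.
    rewrite Z.pow_1_l, Z.mul_1_r by lia. exact H1. }
  { intros n v [[c Hc] Hv]. set (L := 2 ^ (Z.of_nat n + 2)).
    assert (HL : L = 2 ^ Z.of_nat n * 4) by (unfold L; rewrite Z.pow_add_r; lia).
    assert (HL3 : 2 ^ (Z.of_nat n + 3) = 2 * L) by (unfold L; rewrite <- Z.pow_succ_r by lia; f_equal; lia).
    destruct (odd_of_not_divide_2 _ Hd) as [a Ha]. destruct (odd_of_not_divide_2 _ Hv) as [b Hb].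
    exists (v + L * c). split; [exists c; ring|]. split.
    - replace (Z.of_nat (S n) + 3) with ((Z.of_nat n + 2) + 2) by lia.
      rewrite Z.pow_add_r by lia. fold L.
      exists (c * (a + b + 2 * a * b + 1) + 2 ^ Z.of_nat n * d0 * c * c).
      replace (d0 * (v + L * c) ^ 2 - F0) with
        ((d0 * v ^ 2 - F0) + 2 * d0 * v * L * c + d0 * L * L * c * c) by ring.
      rewrite Hc, HL3, Ha, Hb. rewrite HL at 3. ring.
    - intros Hdv. apply Hv. replace v with ((v + L * c) - L * c) by ring.
      apply Z.divide_sub_r; [exact Hdv|]. rewrite HL. apply Z.divide_mul_l, Z.divide_mul_r.
      exists 2; reflexivity. }
  exists g. split; intros k; destruct (Hg k) as [[Hk _] Hr].
  - eapply Z.divide_trans; [|exact Hr]. apply divide_pow_le. lia.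
  - eapply Z.divide_trans; [|exact Hk]. apply divide_pow_le. lia.
Qed.

Lemma Cd_Ql_nonempty_of_root p q D d l z t m A d0 F0 :
  (forall w0, Cd_form p q D d z (m * w0) t = A * (d0 * w0 ^ 2 - F0)) ->
  (~ (l | z) \/ ~ (l | t)) -> Zl_root l (fun w => d0 * w ^ 2 - F0) ->
  Cd_Ql_nonempty p q D d l.
Proof.
  intros Hf Hp [w [Hc Hw]].
  exists (fun _ => z), (fun k => m * w k), (fun _ => t).
  repeat split; try (intros k; rewrite Z.sub_diag; apply Z.divide_0_r).
  - intros k. rewrite <- Z.mul_sub_distr_l. apply Z.divide_mul_r, Hc.
  - exact Hp.
  - intros k. rewrite Hf. apply Z.divide_mul_r, Hw.
Qed.

Definition Cd_point_mod (p q D d l N : Z) : Prop :=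
  exists z w t, (~ (l | z) \/ ~ (l | t)) /\ (N | Cd_form p q D d z w t).

Lemma compatible_divide_first l x : compatible l x -> forall k, (l | x (S k) - x 1%nat).
Proof.
  intros Hc k. induction k as [|k IH].
  - rewrite Z.sub_diag. apply Z.divide_0_r.
  - replace (x (S (S k)) - x 1%nat) with ((x (S (S k)) - x (S k)) + (x (S k) - x 1%nat)) by ring.
    apply Z.divide_add_r; [|exact IH]. eapply Z.divide_trans; [|apply Hc].
    rewrite Nat2Z.inj_succ, Z.pow_succ_r by lia. apply Z.divide_factor_l.
Qed.

Lemma Cd_point_mod_of_Ql p q D d l k : Cd_Ql_nonempty p q D d l -> 0 <= k ->
  Cd_point_mod p q D d l (l ^ k).
Proof.
  intros [z [w [t [Hz [Hw [Ht [Hp Hf]]]]]]] Hk. set (n := S (Z.to_nat k)).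
  assert (Hfirst : forall x, compatible l x -> (l | x n) -> (l | x 1%nat)).
  { intros x Hx Hn. replace (x 1%nat) with (x n - (x n - x 1%nat)) by ring.
    apply Z.divide_sub_r; [exact Hn|]. apply compatible_divide_first; exact Hx. }
  exists (z n), (w n), (t n). split.
  - destruct Hp as [Hp|Hp]; [left|right]; intros HH; apply Hp; eapply Hfirst; eauto.
  - eapply Z.divide_trans; [|apply Hf]. apply divide_pow_le. lia.
Qed.

Definition Di_quartic (e s Dh z t : Z) : Z :=
  t ^ 4 + 2 * e * s * Dh * z ^ 2 * t ^ 2 + 4 * Dh ^ 2 * z ^ 4.

Lemma Cd_form_Di p q l Dh e z w t : e = 1 \/ e = -1 ->
  Cd_form p q (l * Dh) (e * l) z w t = e * l * w ^ 2 - l ^ 2 * Di_quartic e (p + q) Dh z t.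
Proof. unfold Cd_form, Di_quartic. intros [-> | ->]; ring. Qed.

(* For s = r +- 2 the quartic is a norm form, which is why -e r Dh must be a square at its zeros. *)
Lemma Di_quartic_norm_form e r s Dh z t : e = 1 \/ e = -1 -> (s = 2 * r + 2 \/ s = 2 * r - 2) ->
  - e * r * Dh * (e * (t ^ 2 + e * s * Dh * z ^ 2) - 2 * r * Dh * z ^ 2) ^ 2 - (2 * r * Dh * z * t) ^ 2
  = - e * r * Dh * Di_quartic e s Dh z t.
Proof. unfold Di_quartic. intros [-> | ->] [-> | ->]; ring. Qed.

Section OddPlace.
Variable l : Z.
Hypothesis l_prime : prime l.
Hypothesis l_odd : l <> 2.

Let l_ge2 : 2 <= l := prime_ge_2 l l_prime.
Let l_neq0 : l <> 0. Proof. lia. Qed.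

Let l_ndvd_1 : ~ (l | 1) := prime_not_divide_unit l l_prime 1 (or_introl eq_refl).
Let l_ndvd_4 : ~ (l | 4) := odd_prime_not_divide_4 l l_prime l_odd.

Lemma Cd_Ql_nonempty_of_legendre p q D d : legendre_one d l -> Cd_Ql_nonempty p q D d l.
Proof.
  intros [Hd [x Hx]].
  apply (Cd_Ql_nonempty_of_root p q D d l 0 1 1 d 1 d).
  - intros w0. unfold Cd_form. ring.
  - right. exact l_ndvd_1.
  - apply (hensel_lift_odd l 1 d x); auto.
    + exact (not_divide_of_square_mod l d x Hx Hd).
    + rewrite Z.mul_1_l. exact Hx.
Qed.

Lemma divide_of_square_form a w X B : ~ (l | a) ->
  (l ^ 2 | a * w ^ 2 - X ^ 2 + l * B) -> (l | X) -> (l | B).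
Proof.
  intros Ha H [x Hx].
  assert (Hw : (l | w)).
  { apply (prime_divide_sq l l_prime), (prime_divide_mul_cancel_l l l_prime a); [|exact Ha].
    replace (a * w ^ 2) with ((a * w ^ 2 - X ^ 2 + l * B) - l * B + X ^ 2) by ring.
    apply Z.divide_add_r; [apply Z.divide_sub_r|].
    - eapply Z.divide_trans; [|exact H]. exists l. ring.
    - apply Z.divide_factor_l.
    - rewrite Hx. exists (x ^ 2 * l). ring. }
  destruct Hw as [w1 ->]. apply (Z.mul_divide_cancel_l _ _ l l_neq0).
  replace (l * B) with ((a * (w1 * l) ^ 2 - X ^ 2 + l * B) - l * l * (a * w1 ^ 2 - x ^ 2)) by (rewrite Hx; ring).
  apply Z.divide_sub_r; [|apply Z.divide_factor_l].
  replace (l * l) with (l ^ 2) by ring. exact H.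
Qed.

Lemma Cd_form_twin_completed_square p D d z w t : Cd_form p (p + 2) D d z w t =
  d * w ^ 2 - (d * t ^ 2 + (p + (p + 2)) * D * z ^ 2) ^ 2 + 4 * (p * (p + 2)) * D ^ 2 * z ^ 4.
Proof. unfold Cd_form. ring. Qed.

(* Modulo l the form is d w^2 - X^2, so d is a square unless l | X, which forces l | z and l | t. *)
Lemma legendre_of_Cd_Ql_twin p q D d M : q = p + 2 -> p * q = l * M -> ~ (l | M) ->
  ~ (l | D) -> ~ (l | d) -> Cd_Ql_nonempty p q D d l -> legendre_one d l.
Proof.
  intros -> HM HlM HlD Hld Hne. split; [exact Hld|].
  destruct (Cd_point_mod_of_Ql p (p + 2) D d l 2 Hne ltac:(lia)) as [z [w [t [Hprim Hf]]]].
  set (X := d * t ^ 2 + (p + (p + 2)) * D * z ^ 2).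
  assert (Hid : Cd_form p (p + 2) D d z w t = d * w ^ 2 - X ^ 2 + l * (4 * M * D ^ 2 * z ^ 4)).
  { rewrite Cd_form_twin_completed_square, HM. unfold X. ring. }
  rewrite Hid in Hf.
  destruct (Zdivide_dec l X) as [HX|HX].
  - exfalso.
    assert (Hz : (l | z)).
    { destruct (Zdivide_dec l z) as [|Hz]; [assumption|exfalso].
      refine (prime_not_divide_mul l l_prime (4 * M * D ^ 2) (z ^ 4) _ _
        (divide_of_square_form d w X _ Hld Hf HX));
        repeat apply prime_not_divide_mul; try apply prime_not_divide_pow; auto; lia. }
    assert (Ht : (l | t)).
    { apply (prime_divide_sq l l_prime), (prime_divide_mul_cancel_l l l_prime d); [|exact Hld].
      replace (d * t ^ 2) with (X - (p + (p + 2)) * D * z ^ 2) by (unfold X; ring).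
      apply Z.divide_sub_r; [exact HX|]. apply Z.divide_mul_r, divide_sq, Hz. }
    destruct Hprim; contradiction.
  - apply (square_mod_of_mul_sq l l_prime d w X); [|exact HX].
    replace (d * w ^ 2 - X ^ 2) with ((d * w ^ 2 - X ^ 2 + l * (4 * M * D ^ 2 * z ^ 4))
      - l * (4 * M * D ^ 2 * z ^ 4)) by ring.
    apply Z.divide_sub_r; [|apply Z.divide_factor_l].
    eapply Z.divide_trans; [|exact Hf]. exists l. ring.
Qed.

Lemma legendre_of_Cd_Ql_factor_D p q D d D' : D = l * D' -> ~ (l | D') -> ~ (l | d) ->
  Cd_Ql_nonempty p q D d l -> legendre_one d l.
Proof.
  intros HD HlD' Hld Hne. split; [exact Hld|].
  destruct (Cd_point_mod_of_Ql p q D d l 3 Hne ltac:(lia)) as [z [w [t [Hprim Hf]]]].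
  destruct (Zdivide_dec l t) as [[t1 ->]|Ht].
  - assert (Hz : ~ (l | z)) by (destruct Hprim as [Hz|Ht]; [exact Hz|exfalso; apply Ht, Z.divide_factor_r]).
    set (R := d ^ 2 * l * t1 ^ 4 + 2 * (p + q) * D' * d * z ^ 2 * t1 ^ 2).
    assert (Hid : Cd_form p q D d z w (t1 * l) = d * w ^ 2 - l ^ 2 * (2 * D' * z ^ 2) ^ 2 - l ^ 3 * R).
    { unfold Cd_form, R. rewrite HD. ring. }
    rewrite Hid in Hf.
    assert (Hw : (l | w)).
    { apply (prime_divide_sq l l_prime), (prime_divide_mul_cancel_l l l_prime d); [|exact Hld].
      replace (d * w ^ 2) with ((d * w ^ 2 - l ^ 2 * (2 * D' * z ^ 2) ^ 2 - l ^ 3 * R)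
        + l * (l * (2 * D' * z ^ 2) ^ 2 + l ^ 2 * R)) by ring.
      apply Z.divide_add_r; [|apply Z.divide_factor_l].
      eapply Z.divide_trans; [|exact Hf]. exists (l ^ 2). ring. }
    destruct Hw as [w1 ->].
    apply (square_mod_of_mul_sq l l_prime d w1 (2 * D' * z ^ 2)).
    + apply (Z.mul_divide_cancel_l _ _ (l ^ 2)); [apply Z.pow_nonzero; lia|].
      replace (l ^ 2 * (d * w1 ^ 2 - (2 * D' * z ^ 2) ^ 2)) with
        ((d * (w1 * l) ^ 2 - l ^ 2 * (2 * D' * z ^ 2) ^ 2 - l ^ 3 * R) + l ^ 3 * R) by ring.
      replace (l ^ 2 * l) with (l ^ 3) by ring.
      apply Z.divide_add_r; [exact Hf|apply Z.divide_factor_l].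
    + repeat apply prime_not_divide_mul; try apply prime_not_divide_pow; auto; try lia.
      exact (odd_prime_not_divide_2 l l_prime l_odd).
  - apply (square_mod_of_mul_sq l l_prime d w (d * t ^ 2)).
    + replace (d * w ^ 2 - (d * t ^ 2) ^ 2) with
        (Cd_form p q D d z w t + l * (2 * (p + q) * D' * d * z ^ 2 * t ^ 2 + 4 * l * D' ^ 2 * z ^ 4))
        by (unfold Cd_form; rewrite HD; ring).
      apply Z.divide_add_r; [|apply Z.divide_factor_l].
      eapply Z.divide_trans; [|exact Hf]. exists (l ^ 2). ring.
    + apply (prime_not_divide_mul l l_prime); [exact Hld|apply prime_not_divide_pow; auto; lia].
Qed.

Lemma not_Cd_Ql_of_simple_factor_d p q D d d' : ~ (l | D) -> d = l * d' -> ~ (l | d') ->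
  ~ Cd_Ql_nonempty p q D d l.
Proof.
  intros HlD Hd Hld' Hne.
  destruct (Cd_point_mod_of_Ql p q D d l 3 Hne ltac:(lia)) as [z [w [t [Hprim Hf]]]].
  assert (Hl1 : (l | Cd_form p q D d z w t)) by (eapply Z.divide_trans; [|exact Hf]; exists (l ^ 2); ring).
  assert (Hz : (l | z)).
  { destruct (Zdivide_dec l z) as [|Hz]; [assumption|exfalso].
    refine (prime_not_divide_mul l l_prime (4 * D ^ 2) (z ^ 4) _ _ _);
      [apply (prime_not_divide_mul l l_prime); [exact l_ndvd_4|apply prime_not_divide_pow; auto; lia]
      |apply prime_not_divide_pow; auto; lia|].
    replace (4 * D ^ 2 * z ^ 4) with
      (l * (d' * w ^ 2 - l * d' ^ 2 * t ^ 4 - 2 * (p + q) * D * d' * z ^ 2 * t ^ 2) - Cd_form p q D d z w t)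
      by (unfold Cd_form; rewrite Hd; ring).
    apply Z.divide_sub_r; [apply Z.divide_factor_l|exact Hl1]. }
  destruct Hz as [z1 ->].
  assert (Ht : ~ (l | t)) by (destruct Hprim as [Hp|Hp]; [exfalso; apply Hp, Z.divide_factor_r|exact Hp]).
  set (R := 2 * (p + q) * D * d' * z1 ^ 2 * t ^ 2 + l * 4 * D ^ 2 * z1 ^ 4).
  assert (Hid : Cd_form p q D d (z1 * l) w t = l * d' * w ^ 2 - l ^ 2 * d' ^ 2 * t ^ 4 - l ^ 3 * R)
    by (unfold Cd_form, R; rewrite Hd; ring).
  rewrite Hid in Hf.
  assert (Hw : (l | w)).
  { apply (prime_divide_sq l l_prime), (prime_divide_mul_cancel_l l l_prime d'); [|exact Hld'].
    apply (Z.mul_divide_cancel_l _ _ l l_neq0).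
    replace (l * (d' * w ^ 2)) with ((l * d' * w ^ 2 - l ^ 2 * d' ^ 2 * t ^ 4 - l ^ 3 * R)
      + l ^ 2 * (d' ^ 2 * t ^ 4 + l * R)) by ring.
    apply Z.divide_add_r; [|exists (d' ^ 2 * t ^ 4 + l * R); ring].
    eapply Z.divide_trans; [|exact Hf]. exists l. ring. }
  destruct Hw as [w1 ->].
  apply (prime_not_divide_mul l l_prime (d' ^ 2) (t ^ 4)); try (apply prime_not_divide_pow; auto; lia).
  apply (Z.mul_divide_cancel_l _ _ (l ^ 2)); [apply Z.pow_nonzero; lia|].
  replace (l ^ 2 * (d' ^ 2 * t ^ 4)) with
    (l ^ 3 * (d' * w1 ^ 2 - R) - (l * d' * (w1 * l) ^ 2 - l ^ 2 * d' ^ 2 * t ^ 4 - l ^ 3 * R)) by ring.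
  replace (l ^ 2 * l) with (l ^ 3) by ring.
  apply Z.divide_sub_r; [apply Z.divide_factor_l|exact Hf].
Qed.

Lemma legendre_of_Di_quartic_root e r s Dh z t : e = 1 \/ e = -1 ->
  (s = 2 * r + 2 \/ s = 2 * r - 2) -> ~ (l | r) -> ~ (l | Dh) -> ~ (l | z) -> ~ (l | t) ->
  (l | Di_quartic e s Dh z t) -> legendre_one (- e * r * Dh) l.
Proof.
  intros He Hs Hr HDh Hz Ht HQ.
  assert (He' : ~ (l | - e)) by (apply prime_not_divide_unit; [exact l_prime|lia]).
  split; [repeat apply (prime_not_divide_mul l l_prime); assumption|].
  apply (square_mod_of_mul_sq l l_prime _ (e * (t ^ 2 + e * s * Dh * z ^ 2) - 2 * r * Dh * z ^ 2)
    (2 * r * Dh * z * t)).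
  - rewrite Di_quartic_norm_form by assumption. apply Z.divide_mul_r. exact HQ.
  - repeat apply (prime_not_divide_mul l l_prime); assumption || exact (odd_prime_not_divide_2 l l_prime l_odd).
Qed.

Lemma Di_quartic_simple_root e p Dh x1 x2 : e = 1 \/ e = -1 -> ~ (l | Dh) ->
  ~ (l | x1) -> ~ (l | x2) -> (l | x1 ^ 2 + e * p * Dh) -> (l | x2 ^ 2 + e * (p + 2) * Dh) ->
  (l | Di_quartic e (p + (p + 2)) Dh 1 (x1 + x2)) /\
  ~ (l | 4 * (x1 + x2) * ((x1 + x2) ^ 2 + e * (p + (p + 2)) * Dh)).
Proof.
  intros He HDh Hx1 Hx2 H1 H2.
  set (e1 := x1 ^ 2 + e * p * Dh) in *. set (e2 := x2 ^ 2 + e * (p + 2) * Dh) in *.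
  assert (H12 : (l | e1 + e2)) by (apply Z.divide_add_r; assumption).
  split.
  - replace (Di_quartic e (p + (p + 2)) Dh 1 (x1 + x2)) with ((e1 + e2) * (e1 + e2 + 4 * x1 * x2)
      + 4 * e1 * e2 - 4 * e * (p + 2) * Dh * e1 - 4 * e * p * Dh * e2)
      by (unfold Di_quartic, e1, e2; destruct He as [-> | ->]; ring).
    repeat first [apply Z.divide_sub_r | apply Z.divide_add_r];
      solve [apply Z.divide_mul_l; assumption | apply Z.divide_mul_r; assumption].

  - assert (l_ndvd_2 := odd_prime_not_divide_2 l l_prime l_odd).
    repeat apply (prime_not_divide_mul l l_prime); [exact l_ndvd_4| |].
    + intros Ht. apply (prime_not_divide_mul l l_prime 2 (e * Dh)); [exact l_ndvd_2| |].
      * apply (prime_not_divide_mul l l_prime); [apply prime_not_divide_unit; auto|exact HDh].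
      * replace (2 * (e * Dh)) with (e2 - e1 - (x2 - x1) * (x1 + x2)) by (unfold e1, e2; ring).
        apply Z.divide_sub_r; [apply Z.divide_sub_r|apply Z.divide_mul_r]; assumption.
    + intros HS. apply (prime_not_divide_mul l l_prime 2 (x1 * x2)); [exact l_ndvd_2| |].
      * apply (prime_not_divide_mul l l_prime); assumption.
      * replace (2 * (x1 * x2)) with ((x1 + x2) ^ 2 + e * (p + (p + 2)) * Dh - (e1 + e2))
          by (unfold e1, e2; ring).
        apply Z.divide_sub_r; assumption.
Qed.

(* One Newton step t0 = t1 + l r, where r is chosen so that the value at t0,
   which is l c, has c congruent to any prescribed c0. *)
Lemma Di_quartic_newton_step e s Dh t1 c0 : (l | Di_quartic e s Dh 1 t1) ->
  ~ (l | 4 * t1 * (t1 ^ 2 + e * s * Dh)) ->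
  exists t0 c, Di_quartic e s Dh 1 t0 = l * c /\ (l | c - c0).
Proof.
  intros [c1 Hc1] Hg. set (g := 4 * t1 * (t1 ^ 2 + e * s * Dh)) in *.
  destruct (exists_inverse_mod l l_prime g Hg) as [h [k Hk]].
  set (r := (c0 - c1) * h).
  set (T := 6 * t1 ^ 2 + 4 * t1 * l * r + l ^ 2 * r ^ 2 + 2 * e * s * Dh).
  exists (t1 + l * r), (c1 + r * g + l * r ^ 2 * T). split.
  - transitivity (Di_quartic e s Dh 1 t1 + l * r * g + l ^ 2 * r ^ 2 * T);
      [unfold Di_quartic, g, T; ring|rewrite Hc1; ring].
  - exists ((c0 - c1) * k + r ^ 2 * T).
    replace (c1 + r * g + l * r ^ 2 * T - c0) with ((c0 - c1) * (g * h - 1) + l * r ^ 2 * T)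
      by (unfold r; ring).
    rewrite Hk. ring.
Qed.

Lemma legendre_of_Cd_Ql_Di p Dh e : e = 1 \/ e = -1 -> ~ (l | Dh) -> ~ (l | p) -> ~ (l | p + 2) ->
  Cd_Ql_nonempty p (p + 2) (l * Dh) (e * l) l ->
  legendre_one (- e * p * Dh) l /\ legendre_one (- e * (p + 2) * Dh) l.
Proof.
  intros He HDh Hp Hq Hne.
  destruct (Cd_point_mod_of_Ql _ _ _ _ l 3 Hne ltac:(lia)) as [z [w [t [Hprim Hf]]]].
  rewrite Cd_form_Di in Hf by exact He.
  set (Q := Di_quartic e (p + (p + 2)) Dh z t) in *.
  assert (Hw : (l | w)).
  { apply (prime_divide_sq l l_prime), (prime_divide_mul_cancel_l l l_prime e);
      [|apply prime_not_divide_unit; assumption].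
    apply (Z.mul_divide_cancel_l _ _ l l_neq0).
    replace (l * (e * w ^ 2)) with ((e * l * w ^ 2 - l ^ 2 * Q) + l * l * Q) by ring.
    apply Z.divide_add_r; [|apply Z.divide_factor_l].
    eapply Z.divide_trans; [|exact Hf]. exists l. ring. }
  destruct Hw as [w1 ->].
  assert (HQ : (l | Q)).
  { replace Q with (e * w1 ^ 2 * l - (e * w1 ^ 2 * l - Q)) by ring.
    apply Z.divide_sub_r; [apply Z.divide_factor_r|].
    apply (Z.mul_divide_cancel_l _ _ (l ^ 2)); [apply Z.pow_nonzero; lia|].
    replace (l ^ 2 * l) with (l ^ 3) by ring.
    replace (l ^ 2 * (e * w1 ^ 2 * l - Q)) with (e * l * (w1 * l) ^ 2 - l ^ 2 * Q) by ring.
    exact Hf. }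
  assert (Hz : ~ (l | z)).
  { intros [z1 ->]. destruct Hprim as [Hz|Ht]; [apply Hz, Z.divide_factor_r|].
    apply (prime_not_divide_pow l l_prime t 4 Ht ltac:(lia)).
    replace (t ^ 4) with (Q - l * (2 * e * (p + (p + 2)) * Dh * z1 ^ 2 * l * t ^ 2 + 4 * Dh ^ 2 * z1 ^ 4 * l ^ 3))
      by (unfold Q, Di_quartic; ring).
    apply Z.divide_sub_r; [exact HQ|apply Z.divide_factor_l]. }
  assert (Ht : ~ (l | t)).
  { intros [t1 ->].
    refine (prime_not_divide_mul l l_prime 4 (Dh ^ 2 * z ^ 4) l_ndvd_4 _ _).
    - apply (prime_not_divide_mul l l_prime); apply prime_not_divide_pow; auto; lia.
    - replace (4 * (Dh ^ 2 * z ^ 4)) with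
        (Q - l * (t1 ^ 4 * l ^ 3 + 2 * e * (p + (p + 2)) * Dh * z ^ 2 * t1 ^ 2 * l))
        by (unfold Q, Di_quartic; ring).
      apply Z.divide_sub_r; [exact HQ|apply Z.divide_factor_l]. }
  split; apply (legendre_of_Di_quartic_root e _ (p + (p + 2)) Dh z t); auto; lia.
Qed.

Lemma Cd_Ql_of_legendre_Di p Dh e : e = 1 \/ e = -1 -> ~ (l | Dh) ->
  legendre_one (- e * p * Dh) l -> legendre_one (- e * (p + 2) * Dh) l ->
  Cd_Ql_nonempty p (p + 2) (l * Dh) (e * l) l.
Proof.
  intros He HDh [Hp [x1 Hx1]] [Hq [x2 Hx2]].
  pose proof (not_divide_of_square_mod l _ x1 Hx1 Hp) as Hx1n.
  pose proof (not_divide_of_square_mod l _ x2 Hx2 Hq) as Hx2n.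
  replace (x1 ^ 2 - - e * p * Dh) with (x1 ^ 2 + e * p * Dh) in Hx1 by ring.
  replace (x2 ^ 2 - - e * (p + 2) * Dh) with (x2 ^ 2 + e * (p + 2) * Dh) in Hx2 by ring.
  destruct (Di_quartic_simple_root e p Dh x1 x2 He HDh Hx1n Hx2n Hx1 Hx2) as [Hroot Hsimple].
  destruct (Di_quartic_newton_step _ _ _ _ e Hroot Hsimple) as [t0 [c [Hc Hce]]].
  apply (Cd_Ql_nonempty_of_root p (p + 2) (l * Dh) (e * l) l 1 t0 l (l ^ 3) e c).
  - intros w0. rewrite Cd_form_Di, Hc by exact He. ring.
  - left. exact l_ndvd_1.
  - apply (hensel_lift_odd l e c 1); auto.
    + apply prime_not_divide_unit; assumption.
    + replace (e * 1 ^ 2 - c) with (- (c - e)) by ring. apply Z.divide_opp_r. exact Hce.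
Qed.

End OddPlace.

#[local] Existing Instances eqm_setoid Zplus_eqm Zminus_eqm Zmult_eqm Zopp_eqm.

(* Products are spelled out so that the brute-force checks below compute quickly. *)
Definition twin_rhs (p D d z t : Z) : Z :=
  d * d * (t * t * t * t) + 4 * (p + 1) * D * d * (z * z) * (t * t) + 4 * (D * D) * (z * z * z * z).
Definition twin_form (p D d z w t : Z) : Z := d * w * w - twin_rhs p D d z t.

Lemma Cd_form_twin_form p D d z w t : Cd_form p (p + 2) D d z w t = twin_form p D d z w t.
Proof. unfold Cd_form, twin_form, twin_rhs. ring. Qed.

Lemma twin_form_eqm N p D d z w t :
  eqm N (twin_form p D d z w t) (twin_form (p mod N) (D mod N) (d mod N) (z mod N) (w mod N) (t mod N)).
Proof. unfold twin_form, twin_rhs. rewrite !(Zmod_eqm N). reflexivity. Qed.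

Lemma sq_divide_32 x y : (16 | x - y) -> (32 | x * x - y * y).
Proof. intros [k Hk]. exists (k * (y + 8 * k)). replace x with (y + k * 16) by lia. ring. Qed.

Lemma fourth_power_divide_16 x y : (16 | x - y) -> (16 | x * x * (x * x) - y * y * (y * y)).
Proof.
  intros H. destruct (sq_divide_32 x y H) as [k Hk]. exists (2 * k * (x * x + y * y)).
  replace (x * x * (x * x) - y * y * (y * y)) with ((x * x - y * y) * (x * x + y * y)) by ring.
  rewrite Hk. ring.
Qed.

Lemma eqm_of_divide N a b : (N | a - b) -> eqm N a b.
Proof. intros [k Hk]. unfold eqm. replace a with (b + k * N) by lia. apply Z_mod_plus_full. Qed.

Lemma divide_of_eqm N a b : N <> 0 -> eqm N a b -> (N | a - b).
Proof. intros HN H. apply Z.mod_divide; [exact HN|]. rewrite Zminus_mod, H, Z.sub_diag. reflexivity. Qed.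

(* For d = 2e each monomial of the form carries enough powers of 2 that residues
   modulo 16 determine it modulo 64. *)
Lemma twin_form_even_eqm p D e z w t :
  eqm 64 (twin_form p D (2 * e) z w t)
         (twin_form (p mod 16) (D mod 16) (2 * e) (z mod 16) (w mod 16) (t mod 16)).
Proof.
  assert (Hmod : forall x, (16 | x - x mod 16)).
  { intros x. exists (x / 16). pose proof (Z.div_mod x 16 ltac:(lia)). lia. }
  assert (Hmid : (16 | (p + 1) * D * (z * z) * (t * t)
     - (p mod 16 + 1) * (D mod 16) * (z mod 16 * (z mod 16)) * (t mod 16 * (t mod 16)))).
  { apply divide_of_eqm; [lia|]. rewrite !(Zmod_eqm 16). reflexivity. }
  set (p' := p mod 16) in *. set (D' := D mod 16) in *. set (z' := z mod 16) in *.
  set (w' := w mod 16). set (t' := t mod 16) in *.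
  destruct (sq_divide_32 w w' (Hmod w)) as [a Ha].
  destruct (fourth_power_divide_16 t t' (Hmod t)) as [b Hb].
  destruct Hmid as [c Hc].
  destruct (sq_divide_32 D D' (Hmod D)) as [f Hf].
  destruct (fourth_power_divide_16 z z' (Hmod z)) as [g Hg].
  apply eqm_of_divide.
  exists (e * a - e * e * b - e * c * 2 - (D * D * g + z' * z' * (z' * z') * f * 2)).
  transitivity (2 * e * (w * w - w' * w') - 4 * (e * e) * (t * t * (t * t) - t' * t' * (t' * t'))
    - 8 * e * ((p + 1) * D * (z * z) * (t * t) - (p' + 1) * D' * (z' * z') * (t' * t'))
    - 4 * (D * D * (z * z * (z * z) - z' * z' * (z' * z')) + z' * z' * (z' * z') * (D * D - D' * D'))).
  - unfold twin_form, twin_rhs. ring.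
  - rewrite Ha, Hb, Hc, Hf, Hg. ring.
Qed.

Definition residues (M : Z) : list Z := map Z.of_nat (seq 0 (Z.to_nat M)).

Definition square_classes (N M d : Z) : list Z :=
  nodup Z.eq_dec (map (fun w => (d * w * w) mod N) (residues M)).

Definition no_point_check (N M : Z) (ds : list Z) (cond : Z -> Z -> Z -> bool) : bool :=
  forallb (fun d => let W := square_classes N M d in
    forallb (fun p => forallb (fun D =>
      if Z.odd p && Z.odd D && negb (cond d p D) then
        forallb (fun z => forallb (fun t =>
          if Z.odd z || Z.odd t then
            negb (existsb (fun v => (v - twin_rhs p D d z t) mod N =? 0) W)
          else true) (residues M)) (residues M)
      else true)
    (residues M)) (residues M)) ds.

Lemma in_residues M x : 0 <= x < M -> In x (residues M).
Proof.
  intros H. apply in_map_iff. exists (Z.to_nat x). split; [lia|]. apply in_seq. lia.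
Qed.

Lemma odd_mod_even x M : 0 < M -> Z.even M = true -> Z.odd (x mod M) = Z.odd x.
Proof.
  intros HM He. assert (Ho : Z.odd M = false) by (rewrite <- Z.negb_even, He; reflexivity).
  rewrite (Z.div_mod x M) at 2 by lia. rewrite Z.odd_add, Z.odd_mul, Ho. reflexivity.
Qed.

Lemma no_point_check_sound N M ds cond : 0 < N -> 0 < M -> Z.even M = true ->
  no_point_check N M ds cond = true ->
  forall d d' p D z w t, In d' ds ->
  eqm N (twin_form p D d z w t) (twin_form (p mod M) (D mod M) d' (z mod M) (w mod M) (t mod M)) ->
  Z.odd p = true -> Z.odd D = true -> Z.odd z = true \/ Z.odd t = true ->
  (N | twin_form p D d z w t) -> cond d' (p mod M) (D mod M) = true.
Proof.
  intros HN HM He Hc d d' p D z w t Hd Hred Hp HD Hzt Hdiv.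
  assert (Hres : forall x, In (x mod M) (residues M)) by (intros x; apply in_residues, Z.mod_pos_bound; lia).
  unfold no_point_check in Hc. rewrite forallb_forall in Hc. specialize (Hc _ Hd). cbv zeta in Hc.
  rewrite forallb_forall in Hc. specialize (Hc _ (Hres p)).
  rewrite forallb_forall in Hc. specialize (Hc _ (Hres D)).
  rewrite !odd_mod_even, Hp, HD in Hc by assumption. simpl in Hc.
  destruct (cond d' (p mod M) (D mod M)); [reflexivity|exfalso]. simpl in Hc.
  rewrite forallb_forall in Hc. specialize (Hc _ (Hres z)).
  rewrite forallb_forall in Hc. specialize (Hc _ (Hres t)).
  rewrite !odd_mod_even in Hc by assumption.
  replace (Z.odd z || Z.odd t) with true in Hc by (destruct Hzt as [-> | ->]; [|rewrite orb_true_r]; reflexivity). apply negb_true_iff, not_true_iff_false in Hc. apply Hc, existsb_exists.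
  exists ((d' * (w mod M) * (w mod M)) mod N). split.
  - apply nodup_In, in_map_iff. exists (w mod M). split; [reflexivity|apply Hres].
  - apply Z.eqb_eq. rewrite Zminus_mod_idemp_l.
    change ((twin_form (p mod M) (D mod M) d' (z mod M) (w mod M) (t mod M)) mod N = 0).
    rewrite <- Hred. apply Z.mod_divide; [lia|exact Hdiv].
Qed.

Definition cond_B1 (d p D : Z) : bool := (D * (D + 2 * p + 2)) mod 16 =? 1.
Definition cond_B2 (d p D : Z) : bool := (D * (- D + 2 * p + 2)) mod 16 =? 3.
Definition cond_C (d p D : Z) : bool := negb (Z.odd d) || (d mod 4 =? 1).

Lemma check_B1 : no_point_check 64 16 [2] cond_B1 = true.
Proof. vm_compute. reflexivity. Qed.

Lemma check_B2 : no_point_check 64 16 [-2] cond_B2 = true.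
Proof. vm_compute. reflexivity. Qed.

Lemma check_C : no_point_check 16 16 (residues 16) cond_C = true.
Proof. vm_compute. reflexivity. Qed.

Lemma Z_odd_of_not_divide_2 x : ~ (2 | x) -> Z.odd x = true.
Proof. intros H. destruct (odd_of_not_divide_2 x H) as [k ->]. rewrite Z.add_comm, Z.odd_add_mul_2. reflexivity. Qed.

Lemma not_2_divide_1 : ~ (2 | 1).
Proof. intros [c Hc]. lia. Qed.

Lemma Cd_Q2_point_mod_64 p D d : ~ (2 | p) -> ~ (2 | D) -> Cd_Ql_nonempty p (p + 2) D d 2 ->
  exists z w t, (Z.odd z = true \/ Z.odd t = true) /\ (64 | twin_form p D d z w t).
Proof.
  intros Hp HD Hne. destruct (Cd_point_mod_of_Ql _ _ _ _ 2 6 Hne ltac:(lia)) as [z [w [t [Hprim Hf]]]].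
  exists z, w, t. rewrite Cd_form_twin_form in Hf. split; [|exact Hf].
  destruct Hprim as [H|H]; [left|right]; apply Z_odd_of_not_divide_2; exact H.
Qed.

Lemma Cd_Q2_two p D : ~ (2 | p) -> ~ (2 | D) ->
  (Cd_Ql_nonempty p (p + 2) D 2 2 <-> (D * (D + 2 * p + 2)) mod 16 = 1).
Proof.
  intros Hp HD. split.
  - intros Hne. destruct (Cd_Q2_point_mod_64 p D 2 Hp HD Hne) as [z [w [t [Hzt Hf]]]].
    pose proof (no_point_check_sound 64 16 [2] cond_B1 ltac:(lia) ltac:(lia) eq_refl check_B1
      2 2 p D z w t (in_eq _ _) (twin_form_even_eqm p D 1 z w t)
      (Z_odd_of_not_divide_2 _ Hp) (Z_odd_of_not_divide_2 _ HD) Hzt Hf) as Hc.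
    apply Z.eqb_eq in Hc. rewrite <- Hc.
    change (eqm 16 (D * (D + 2 * p + 2)) (D mod 16 * (D mod 16 + 2 * (p mod 16) + 2))).
    rewrite !(Zmod_eqm 16). reflexivity.
  - intros E. set (j := (D * (D + 2 * p + 2)) / 16).
    assert (Ej : D * (D + 2 * p + 2) = 16 * j + 1) by (pose proof (Z.div_mod (D * (D + 2 * p + 2)) 16); lia).
    apply (Cd_Ql_nonempty_of_root p (p + 2) D 2 2 1 1 2 8 1 (8 * j + 1)).
    + intros w0. transitivity (8 * w0 ^ 2 - 4 * (D * (D + 2 * p + 2)) - 4);
        [unfold Cd_form; ring|rewrite Ej; ring].
    + left. exact not_2_divide_1.
    + apply hensel_lift_two; [exact not_2_divide_1|]. exists (- j). ring.
Qed.

Lemma Cd_Q2_neg_two p D : ~ (2 | p) -> ~ (2 | D) ->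
  (Cd_Ql_nonempty p (p + 2) D (-2) 2 <-> (D * (- D + 2 * p + 2)) mod 16 = 3).
Proof.
  intros Hp HD. split.
  - intros Hne. destruct (Cd_Q2_point_mod_64 p D (-2) Hp HD Hne) as [z [w [t [Hzt Hf]]]].
    pose proof (no_point_check_sound 64 16 [-2] cond_B2 ltac:(lia) ltac:(lia) eq_refl check_B2
      (-2) (-2) p D z w t (in_eq _ _) (twin_form_even_eqm p D (-1) z w t)
      (Z_odd_of_not_divide_2 _ Hp) (Z_odd_of_not_divide_2 _ HD) Hzt Hf) as Hc.
    apply Z.eqb_eq in Hc. rewrite <- Hc.
    change (eqm 16 (D * (- D + 2 * p + 2)) (D mod 16 * (- (D mod 16) + 2 * (p mod 16) + 2))).
    rewrite !(Zmod_eqm 16). reflexivity.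
  - intros E. set (j := (D * (- D + 2 * p + 2)) / 16).
    assert (Ej : D * (- D + 2 * p + 2) = 16 * j + 3)
      by (pose proof (Z.div_mod (D * (- D + 2 * p + 2)) 16); lia).
    apply (Cd_Ql_nonempty_of_root p (p + 2) D (-2) 2 1 1 2 8 (-1) (- (8 * j + 1))).
    + intros w0. transitivity (- 8 * w0 ^ 2 + 4 * (D * (- D + 2 * p + 2)) - 4);
        [unfold Cd_form; ring|rewrite Ej; ring].
    + left. exact not_2_divide_1.
    + apply hensel_lift_two; [intros [c Hc]; lia|]. exists j. ring.
Qed.

Lemma Cd_Q2_odd p D d : ~ (2 | p) -> ~ (2 | D) -> ~ (2 | d) ->
  (Cd_Ql_nonempty p (p + 2) D d 2 <-> d mod 4 = 1).
Proof.
  intros Hp HD Hd. split.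
  - intros Hne. destruct (Cd_Q2_point_mod_64 p D d Hp HD Hne) as [z [w [t [Hzt Hf]]]].
    assert (Hf16 : (16 | twin_form p D d z w t)) by (eapply Z.divide_trans; [|exact Hf]; exists 4; reflexivity).
    pose proof (no_point_check_sound 16 16 (residues 16) cond_C ltac:(lia) ltac:(lia) eq_refl check_C
      d (d mod 16) p D z w t (in_residues _ _ (Z.mod_pos_bound d 16 ltac:(lia)))
      (twin_form_eqm 16 p D d z w t) (Z_odd_of_not_divide_2 _ Hp) (Z_odd_of_not_divide_2 _ HD)
      Hzt Hf16) as Hc.
    unfold cond_C in Hc. rewrite odd_mod_even, (Z_odd_of_not_divide_2 _ Hd) in Hc by (reflexivity || lia).
    apply Z.eqb_eq in Hc. rewrite <- Hc, <- Zmod_div_mod; [reflexivity|lia|lia|exists 4; reflexivity].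
  - intros E. destruct (odd_of_not_divide_2 _ Hp) as [a Ha]. destruct (odd_of_not_divide_2 _ HD) as [b Hb].
    assert (Hk : d = 8 * (d / 8) + 1 \/ d = 8 * (d / 8) + 5)
      by (pose proof (Z.div_mod d 8); pose proof (Z.mod_pos_bound d 8); pose proof (Z.div_mod d 4); lia).
    set (k := d / 8) in *. destruct Hk as [Hk|Hk].
    + apply (Cd_Ql_nonempty_of_root p (p + 2) D d 2 0 1 1 1 d (d ^ 2)).
      * intros w0. unfold Cd_form. ring.
      * right. exact not_2_divide_1.
      * apply hensel_lift_two; [exact Hd|]. exists (- (8 * k + 1) * k). rewrite Hk. ring.
    + apply (Cd_Ql_nonempty_of_root p (p + 2) D d 2 1 1 1 1 d (d ^ 2 + 4 * (p + 1) * D * d + 4 * D ^ 2)).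
      * intros w0. unfold Cd_form. ring.
      * right. exact not_2_divide_1.
      * apply hensel_lift_two; [exact Hd|].
        exists (- (8 * k ^ 2 + 9 * k + 3) - 2 * (b ^ 2 + b) - (a + 1) * (2 * b + 1) * (8 * k + 5)).
        rewrite Hk, Ha, Hb. ring.
Qed.

Lemma prime_divide_prodZ l Ds : prime l -> Forall prime Ds -> (l | prodZ Ds) -> In l Ds.
Proof.
  intros Hl. induction Ds as [|a Ds IH]; intros HF H; simpl in *.
  - apply Z.divide_1_r in H. pose proof (prime_ge_2 _ Hl). lia.
  - inversion HF; subst. destruct (prime_mult _ Hl _ _ H) as [H1|H1].
    + left. symmetry. apply prime_div_prime; assumption.
    + right. auto.
Qed.

Lemma prodZ_split l Ds : NoDup Ds -> Forall prime Ds -> In l Ds ->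
  exists D', prodZ Ds = l * D' /\ ~ (l | D').
Proof.
  intros Hnd HF Hin. induction Ds as [|a Ds IH]; [destruct Hin|].
  inversion Hnd as [|? ? Ha Hnd']; subst. inversion HF as [|? ? Hpa HF']; subst.
  destruct Hin as [<- | Hin].
  - exists (prodZ Ds). split; [reflexivity|]. intros H. apply Ha, prime_divide_prodZ; assumption.
  - destruct (IH Hnd' HF' Hin) as [D' [E Hn]]. exists (a * D'). split; [simpl; rewrite E; ring|].
    assert (Hl : prime l) by (rewrite Forall_forall in HF'; auto).
    intros H. destruct (prime_mult _ Hl _ _ H) as [H0|H0]; [|contradiction].
    apply prime_div_prime in H0; [subst; contradiction|assumption|assumption].
Qed.

Section TwinPrimes.
Variables (p : Z) (Ds : list Z).
Hypotheses (p_prime : prime p) (q_prime : prime (p + 2)) (p_odd : p <> 2).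
Hypotheses (Ds_nodup : NoDup Ds) (Ds_prime : Forall prime Ds).
Hypotheses (D_odd : ~ (2 | prodZ Ds)) (p_ndvd_D : ~ (p | prodZ Ds)) (q_ndvd_D : ~ (p + 2 | prodZ Ds)).

Let D := prodZ Ds.
Let p_ge2 : 2 <= p := prime_ge_2 p p_prime.

Lemma two_ndvd_p : ~ (2 | p).
Proof. intros H. apply p_odd. symmetry. apply prime_div_prime; auto using prime_2. Qed.

Lemma p_ndvd_q : ~ (p | p + 2).
Proof. intros H. apply prime_div_prime in H; auto; lia. Qed.

Lemma q_ndvd_p : ~ (p + 2 | p).
Proof. intros H. apply prime_div_prime in H; auto; lia. Qed.

Lemma prime_factor_pqD l : prime l -> (l | p * (p + 2) * D) -> l = p \/ l = p + 2 \/ In l Ds.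
Proof.
  intros Hl H. destruct (prime_mult _ Hl _ _ H) as [H1|H1]; [destruct (prime_mult _ Hl _ _ H1) as [H2|H2]|].
  - left. apply prime_div_prime; assumption.
  - right; left. apply prime_div_prime; assumption.
  - right; right. apply prime_divide_prodZ; assumption.
Qed.

Lemma prime_factor_pqD_odd l : prime l -> (l | p * (p + 2) * D) -> l <> 2.
Proof.
  intros Hl H ->. destruct (prime_factor_pqD 2 Hl H) as [E|[E|Hin]]; [congruence|lia|].
  apply D_odd. destruct (prodZ_split 2 Ds Ds_nodup Ds_prime Hin) as [D' [E _]].
  rewrite E. apply Z.divide_factor_l.
Qed.

Lemma Cd_Ql_nonempty_bad_place d l : prime l -> (l | p * (p + 2) * D) -> ~ (l | d) ->
  (Cd_Ql_nonempty p (p + 2) D d l <-> legendre_one d l).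
Proof.
  intros Hl Hdiv Hld. pose proof (prime_factor_pqD_odd l Hl Hdiv) as Hl2.
  split; [|apply Cd_Ql_nonempty_of_legendre; assumption].
  destruct (prime_factor_pqD l Hl Hdiv) as [->|[->|Hin]].
  - apply (legendre_of_Cd_Ql_twin p Hl Hl2 p (p + 2) D d (p + 2)); auto using p_ndvd_q.
  - apply (legendre_of_Cd_Ql_twin (p + 2) Hl Hl2 p (p + 2) D d p); auto using q_ndvd_p; ring.
  - destruct (prodZ_split l Ds Ds_nodup Ds_prime Hin) as [D' [E HD']].
    apply (legendre_of_Cd_Ql_factor_D l Hl Hl2 p (p + 2) D d D'); assumption.
Qed.

Lemma twin_three_mod_four : p mod 4 = 3 \/ (p + 2) mod 4 = 3.
Proof.
  destruct (odd_of_not_divide_2 p two_ndvd_p) as [a Ha]. rewrite Ha. Z.to_euclidean_division_equations. lia.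
Qed.

Lemma not_in_Sphi_of_bad_d d : in_QS2 p (p + 2) Ds d -> ((p | d) \/ (p + 2 | d) \/ d = -1) ->
  ~ in_Sphi p (p + 2) Ds d.
Proof.
  intros [_ [Hsq _]] Hcase [_ [_ Hloc]].
  assert (Hsimple : forall l, prime l -> l <> 2 -> ~ (l | D) -> (l | d) -> finite_place p (p + 2) Ds l -> False).
  { intros l Hl Hl2 HlD [d' Hd'] Hpl. apply (not_Cd_Ql_of_simple_factor_d l Hl Hl2 p (p + 2) D d d' HlD).
    - rewrite Hd'. ring.
    - intros [k Hk]. apply (Hsq l Hl). exists k. rewrite Hd', Hk. ring.
    - exact (Hloc l Hpl). }
  destruct Hcase as [H|[H| ->]].
  - apply (Hsimple p); auto. right; left; reflexivity.
  - apply (Hsimple (p + 2)); auto; [lia|]. right; right; left; reflexivity.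
  - assert (Hbad : forall l, prime l -> (l = p \/ l = p + 2) -> l mod 4 = 3 -> False).
    { intros l Hl Hlpq H4. apply (not_legendre_one_neg_one l Hl H4).
      assert (Hdiv : (l | p * (p + 2) * D))
        by (destruct Hlpq as [-> | ->]; [exists ((p + 2) * D) | exists (p * D)]; ring).
      apply (Cd_Ql_nonempty_bad_place (-1) l Hl Hdiv).
      - apply prime_not_divide_unit; [exact Hl|right; reflexivity].
      - apply Hloc. unfold finite_place. destruct Hlpq; auto. }
    destruct twin_three_mod_four as [H4|H4]; [apply (Hbad p)|apply (Hbad (p + 2))]; auto.
Qed.

Lemma Cd_Ql_two_bad_place l : prime l -> (l | p * (p + 2) * D) ->
  (Cd_Ql_nonempty p (p + 2) D 2 l <-> legendre_one 2 l) /\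
  (Cd_Ql_nonempty p (p + 2) D 2 l <-> l mod 8 = 1 \/ l mod 8 = 7).
Proof.
  intros Hl Hdiv. pose proof (prime_factor_pqD_odd l Hl Hdiv) as Hl2.
  assert (E : Cd_Ql_nonempty p (p + 2) D 2 l <-> legendre_one 2 l)
    by exact (Cd_Ql_nonempty_bad_place 2 l Hl Hdiv (odd_prime_not_divide_2 l Hl Hl2)).
  split; [exact E|]. rewrite E. apply legendre_one_two; assumption.
Qed.

Lemma Cd_Ql_neg_two_bad_place l : prime l -> (l | p * (p + 2) * D) ->
  (Cd_Ql_nonempty p (p + 2) D (-2) l <-> legendre_one (-2) l) /\
  (Cd_Ql_nonempty p (p + 2) D (-2) l <-> l mod 8 = 1 \/ l mod 8 = 3).
Proof.
  intros Hl Hdiv. pose proof (prime_factor_pqD_odd l Hl Hdiv) as Hl2.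
  assert (E : Cd_Ql_nonempty p (p + 2) D (-2) l <-> legendre_one (-2) l).
  { apply Cd_Ql_nonempty_bad_place; auto.
    intros H. apply (odd_prime_not_divide_2 l Hl Hl2), Z.divide_opp_r. exact H. }
  split; [exact E|]. rewrite E. apply legendre_one_two; assumption.
Qed.

Lemma Ds_factor Di : In Di Ds ->
  prime Di /\ Di <> 2 /\ ~ (Di | p) /\ ~ (Di | p + 2) /\ D = Di * (D / Di) /\ ~ (Di | D / Di).
Proof.
  intros HDi. assert (HDip : prime Di) by (rewrite Forall_forall in Ds_prime; auto).
  destruct (prodZ_split Di Ds Ds_nodup Ds_prime HDi) as [D' [E HD']].
  assert (EDh : D / Di = D') by (unfold D; rewrite E, Z.mul_comm, Z.div_mul; [reflexivity|pose proof (prime_ge_2 _ HDip); lia]).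
  assert (HDiD : (Di | D)) by (exists D'; unfold D; rewrite E; ring).
  rewrite EDh. refine (conj HDip (conj _ (conj _ (conj _ (conj E HD'))))).
  - intros ->. apply D_odd. exact HDiD.
  - intros H. apply prime_div_prime in H; auto. subst. contradiction.
  - intros H. apply prime_div_prime in H; auto. rewrite H in HDiD. contradiction.
Qed.

Lemma Cd_Ql_Di_bad_place Di d l : In Di Ds -> (d = Di \/ d = - Di) -> prime l ->
  (l | p * (p + 2) * (D / Di)) -> (Cd_Ql_nonempty p (p + 2) D d l <-> legendre_one d l).
Proof.
  intros HDi Hd Hl Hdiv.
  destruct (Ds_factor Di HDi) as [HDip [_ [Hp [Hq [E HDh]]]]].
  apply Cd_Ql_nonempty_bad_place; [exact Hl| |].
  - rewrite E. replace (p * (p + 2) * (Di * (D / Di))) with ((p * (p + 2) * (D / Di)) * Di) by ring.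
    apply Z.divide_mul_l. exact Hdiv.
  - intros Hld. assert (HlDi : (l | Di)) by (destruct Hd as [-> | ->]; [|apply Z.divide_opp_r]; exact Hld).
    apply prime_div_prime in HlDi; [subst l|exact Hl|exact HDip].
    destruct (prime_mult _ HDip _ _ Hdiv) as [H|H]; [destruct (prime_mult _ HDip _ _ H) as [H'|H']|];
      contradiction.
Qed.

Lemma Cd_Ql_at_Di Di e : In Di Ds -> e = 1 \/ e = -1 ->
  (Cd_Ql_nonempty p (p + 2) D (e * Di) Di <->
   legendre_one (- e * p * (D / Di)) Di /\ legendre_one (- e * (p + 2) * (D / Di)) Di).
Proof.
  intros HDi He.
  destruct (Ds_factor Di HDi) as [HDip [HDi2 [Hp [Hq [E HDh]]]]].
  set (Dh := D / Di) in *. rewrite E. split.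
  - apply (legendre_of_Cd_Ql_Di Di HDip HDi2 p Dh e); assumption.
  - intros [H1 H2]. apply (Cd_Ql_of_legendre_Di Di HDip HDi2 p Dh e); assumption.
Qed.

Lemma Cd_Ql_Di_criteria Di : In Di Ds ->
  let Dhat := D / Di in
  ((Cd_Ql_nonempty p (p + 2) D Di 2 <-> Di mod 4 = 1) /\
   (forall l, prime l -> (l | p * (p + 2) * Dhat) ->
      (Cd_Ql_nonempty p (p + 2) D Di l <-> legendre_one Di l)) /\
   (Cd_Ql_nonempty p (p + 2) D Di Di <->
      legendre_one (- p * Dhat) Di /\ legendre_one (- (p + 2) * Dhat) Di)) /\
  ((Cd_Ql_nonempty p (p + 2) D (- Di) 2 <-> Di mod 4 = 3) /\
   (forall l, prime l -> (l | p * (p + 2) * Dhat) ->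
      (Cd_Ql_nonempty p (p + 2) D (- Di) l <-> legendre_one (- Di) l)) /\
   (Cd_Ql_nonempty p (p + 2) D (- Di) Di <->
      legendre_one (p * Dhat) Di /\ legendre_one ((p + 2) * Dhat) Di)).
Proof.
  intros HDi Dhat. destruct (Ds_factor Di HDi) as [HDip [HDi2 _]].
  pose proof two_ndvd_p as Hp2.
  assert (HDi_odd : ~ (2 | Di)) by (intros H; apply HDi2; symmetry; apply prime_div_prime; auto using prime_2).
  assert (HmDi_odd : ~ (2 | - Di)) by (intros H; apply HDi_odd, Z.divide_opp_r; exact H).
  pose proof (Cd_Ql_at_Di Di 1 HDi (or_introl eq_refl)) as Hplus.
  pose proof (Cd_Ql_at_Di Di (-1) HDi (or_intror eq_refl)) as Hminus.
  rewrite Z.mul_1_l in Hplus.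
  replace (Z.opp 1 * p * (D / Di)) with (- p * (D / Di)) in Hplus by ring.
  replace (Z.opp 1 * (p + 2) * (D / Di)) with (- (p + 2) * (D / Di)) in Hplus by ring.
  replace (-1 * Di) with (- Di) in Hminus by ring.
  replace (Z.opp (-1) * p * (D / Di)) with (p * (D / Di)) in Hminus by ring.
  replace (Z.opp (-1) * (p + 2) * (D / Di)) with ((p + 2) * (D / Di)) in Hminus by ring.
  split; (split; [|split]).
  - apply Cd_Q2_odd; assumption.
  - intros l Hl Hdiv. apply (Cd_Ql_Di_bad_place Di); auto.
  - exact Hplus.
  - rewrite Cd_Q2_odd by assumption. Z.to_euclidean_division_equations. lia.
  - intros l Hl Hdiv. apply (Cd_Ql_Di_bad_place Di); auto.
  - exact Hminus.
Qed.
End TwinPrimes.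

Theorem proposition2p5 (p q : Z) (Ds : list Z) :
  prime p -> prime q -> p <> 2 -> q - p = 2 ->
  Ds <> nil -> NoDup Ds -> Forall prime Ds ->
  ~ (2 | prodZ Ds) -> ~ (p | prodZ Ds) -> ~ (q | prodZ Ds) ->
  let D := prodZ Ds in
  (* (A) *)
  (forall d, in_QS2 p q Ds d -> ((p | d) \/ (q | d) \/ d = -1) ->
     ~ in_Sphi p q Ds d) /\
  (* (B1) *)
  (Cd_Ql_nonempty p q D 2 2 <-> (D * (D + 2 * p + 2)) mod 16 = 1) /\
  (forall l, prime l -> (l | p * q * D) ->
     (Cd_Ql_nonempty p q D 2 l <-> legendre_one 2 l) /\
     (Cd_Ql_nonempty p q D 2 l <-> l mod 8 = 1 \/ l mod 8 = 7)) /\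
  (* (B2) *)
  (Cd_Ql_nonempty p q D (-2) 2 <-> (D * (- D + 2 * p + 2)) mod 16 = 3) /\
  (forall l, prime l -> (l | p * q * D) ->
     (Cd_Ql_nonempty p q D (-2) l <-> legendre_one (-2) l) /\
     (Cd_Ql_nonempty p q D (-2) l <-> l mod 8 = 1 \/ l mod 8 = 3)) /\
  (* (C1) and (C2) *)
  (forall Di, In Di Ds ->
     let Dhat := D / Di in
     ((Cd_Ql_nonempty p q D Di 2 <-> Di mod 4 = 1) /\
      (forall l, prime l -> (l | p * q * Dhat) ->
         (Cd_Ql_nonempty p q D Di l <-> legendre_one Di l)) /\
      (Cd_Ql_nonempty p q D Di Di <->
         legendre_one (- p * Dhat) Di /\ legendre_one (- q * Dhat) Di)) /\
     ((Cd_Ql_nonempty p q D (- Di) 2 <-> Di mod 4 = 3) /\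
      (forall l, prime l -> (l | p * q * Dhat) ->
         (Cd_Ql_nonempty p q D (- Di) l <-> legendre_one (- Di) l)) /\
      (Cd_Ql_nonempty p q D (- Di) Di <->
         legendre_one (p * Dhat) Di /\ legendre_one (q * Dhat) Di))).
Proof.
  intros Hp Hq Hp2 Hqp _ Hnd HF H2D HpD HqD D.
  assert (Eq : q = p + 2) by lia. subst q.
  pose proof (two_ndvd_p p Hp Hp2) as Hp_odd.
  split; [|split; [|split; [|split; [|split]]]].
  - intros d. apply not_in_Sphi_of_bad_d; assumption.
  - apply Cd_Q2_two; assumption.
  - intros l. apply Cd_Ql_two_bad_place; assumption.
  - apply Cd_Q2_neg_two; assumption.
  - intros l. apply Cd_Ql_neg_two_bad_place; assumption.
  - intros Di. apply Cd_Ql_Di_criteria; assumption.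
Qed.
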